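(* Let $N\ge2$, let $\mathcal{A}=(a_{i_1\cdots i_N})\in\mathbb{C}^{d_1\times\cdots\times d_N}$, and for each $l\in\{1,\dots,N\}$ let $\mathbf{U}^{(l)}=(u^{(l)}_{i_l'i_l})\in\mathbb{C}^{d_l'\times d_l}$. Let $\mathcal{B}=\mathcal{A}\times_1\mathbf{U}^{(1)}\times_2\cdots\times_N\mathbf{U}^{(N)}\in\mathbb{C}^{d_1'\times\cdots\times d_N'}$. Then for every $k\in\{1,\dots,N-1\}$, $n\in\{1,\dots,k\}$, $m\in\{1,\dots,N-k\}$ and all sequences $R=(r_1,\dots,r_k)$, $C=(c_1,\dots,c_{N-k})$ of distinct integers with $\{r_1,\dots,r_k\}\cup\{c_1,\dots,c_{N-k}\}=\{1,\dots,N\}$, $$\mathbf{B}_{(R,n;C,m)}=\big(\mathbf{U}^{(r_{n+1})}\otimes\cdots\otimes\mathbf{U}^{(r_k)}\otimes\mathbf{U}^{(r_1)}\otimes\cdots\otimes\mathbf{U}^{(r_n)}\big)\,\mathbf{A}_{(R,n;C,m)}\,\big(\mathbf{U}^{(c_{m+1})}\otimes\cdots\otimes\mathbf{U}^{(c_{N-k})}\otimes\mathbf{U}^{(c_1)}\otimes\cdots\otimes\mathbf{U}^{(c_m)}\big)^{\rm T},$$ where $\mathbf{A}_{(R,n;C,m)}$ and $\mathbf{B}_{(R,n;C,m)}$ are the mixed $(R,n;C,m)$-mode matrix unfoldings of $\mathcal{A}$ and $\mathcal{B}$ and $\otimes$ is the Kronecker product.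
   Context: The $k$-mode product of $\mathcal{A}\in\mathbb{C}^{d_1\times\cdots\times d_N}$ with $\mathbf{U}=(u_{i_k'i_k})\in\mathbb{C}^{d_k'\times d_k}$ is the tensor $\mathcal{A}\times_k\mathbf{U}$ of size $d_1\times\cdots\times d_{k-1}\times d_k'\times d_{k+1}\times\cdots\times d_N$ with entries $\sum_{i_k=1}^{d_k}a_{i_1\cdots i_k\cdots i_N}u_{i_k'i_k}$. Index map: for positive integers $D_1,\dots,D_k$, $n\in\{1,\dots,k\}$, $j_s\in\{1,\dots,D_s\}$, $$\iota_n^{(D_1,\dots,D_k)}(j_1,\dots,j_k)=\Big(\prod_{s=1}^{n}D_s\Big)\sum_{s'=n+1}^{k}\Big((j_{s'}-1)\prod_{s''=s'+1}^{k}D_{s''}\Big)+\sum_{s'=1}^{n}\Big((j_{s'}-1)\prod_{s''=s'+1}^{n}D_{s''}\Big)+1$$ (empty products $1$, empty sums $0$). Mixed mode matrix unfolding: for $\mathcal{X}=(x_{i_1\cdots i_N})\in\mathbb{C}^{D_1\times\cdots\times D_N}$ and $R,C,n,m$ as in the claim, $\mathbf{X}_{(R,n;C,m)}\in\mathbb{C}^{(D_{r_1}\cdots D_{r_k})\times(D_{c_1}\cdots D_{c_{N-k}})}$ has entry $x_{i_1\cdots i_N}$ in row $\iota_n^{(D_{r_1},\dots,D_{r_k})}(i_{r_1},\dots,i_{r_k})$ and column $\iota_m^{(D_{c_1},\dots,D_{c_{N-k}})}(i_{c_1},\dots,i_{c_{N-k}})$. *)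

From HB Require Import structures.
From mathcomp Require Import all_boot all_order all_algebra.
From mathcomp Require Import complex mxtens.
From mathcomp Require Import Rstruct.
From Stdlib Require Import Rdefinitions.

Set Implicit Arguments.
Unset Strict Implicit.
Unset Printing Implicit Defensive.

Import GRing.Theory.

Definition Cplx : comNzRingType := (Rdefinitions.R)[i].

Local Open Scope ring_scope.

Section Tensors.
Variable N : nat.

(* multi-indices of a tensor in C^{D_1 x ... x D_N} (0-based, modes 'I_N) *)
Definition midx (D : 'I_N -> nat) := {dffun forall l : 'I_N, 'I_(D l)}.

Definition tensor (D : 'I_N -> nat) := midx D -> Cplx.

(* working representation: tensors as functions of nat-valued multi-indices
   (only values on the index box are ever used) *)
Definition ntensor := ('I_N -> nat) -> Cplx.

Definition of_tensor (D : 'I_N -> nat) (A : tensor D) : ntensor :=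
  fun i => \sum_(j : midx D | [forall l, (j l : nat) == i l]) A j.

Definition to_tensor (D : 'I_N -> nat) (X : ntensor) : tensor D :=
  fun j => X (fun l => (j l : nat)).

(* entry of a matrix at nat positions (0 outside the matrix) *)
Definition mxn (m n : nat) (U : 'M[Cplx]_(m, n)) (a b : nat) : Cplx :=
  match insub a, insub b with
  | Some a', Some b' => U a' b'
  | _, _ => 0
  end.

Definition mode_product (dk dk' : nat) (k : 'I_N) (X : ntensor)
    (U : 'M[Cplx]_(dk', dk)) : ntensor :=
  fun i => \sum_(j < dk) X (fun l => if l == k then (j : nat) else i l)
                         * mxn U (i k) j.

Definition full_mode_product (d d' : 'I_N -> nat) (A : tensor d)
    (U : forall l : 'I_N, 'M[Cplx]_(d' l, d l)) : tensor d' :=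
  @to_tensor d'
    (foldl (fun X l => @mode_product (d l) (d' l) l X (U l))
       (@of_tensor d A) (enum 'I_N)).

End Tensors.

(* index map iota_n^{(D_1..D_k)}(j_1..j_k), shifted to 0-based values:
   result - 1 with all j_s - 1 *)
Definition iota_idx (n : nat) (D j : seq nat) : nat :=
  ((\prod_(s < n) D`_s)
     * (\sum_(n <= s' < size D) j`_s' * \prod_(s'.+1 <= s'' < size D) D`_s''))%N
  + (\sum_(s' < n) j`_s' * \prod_(s'.+1 <= s'' < n) D`_s'')%N.

Definition dprod N (D : 'I_N -> nat) (s : seq 'I_N) : nat :=
  foldr (fun l a => D l * a)%N 1%N s.

(* mixed mode matrix unfolding X_(R,n;C,m); its size is
   (D_{r_1}...D_{r_k}) x (D_{c_1}...D_{c_{N-k}}), the products being written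
   in the (equal) rotated order so that the Kronecker products typecheck *)
Definition unfold N (D : 'I_N -> nat) (X : tensor D)
    (R : seq 'I_N) (n : nat) (C : seq 'I_N) (m : nat) :
    'M[Cplx]_(dprod D (rot n R), dprod D (rot m C)) :=
  \matrix_(p, q)
    \sum_(i : midx D |
            (iota_idx n (map D R) (map (fun l => (i l : nat)) R) == p)
         && (iota_idx m (map D C) (map (fun l => (i l : nat)) C) == q))
      X i.

Fixpoint kron_seq N (d d' : 'I_N -> nat)
    (U : forall l : 'I_N, 'M[Cplx]_(d' l, d l)) (s : seq 'I_N) :
    'M[Cplx]_(dprod d' s, dprod d s) :=
  match s return 'M[Cplx]_(dprod d' s, dprod d s) with
  | [::] => 1%:M
  | l :: s' => U l *t kron_seq U s'
  end.

From HB Require Import structures.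
From mathcomp Require Import all_boot all_order all_algebra.
From mathcomp Require Import complex mxtens.

Set Implicit Arguments.
Unset Strict Implicit.
Unset Printing Implicit Defensive.

(* Every entry of B is b_i = sum_j a_j prod_l u^(l)_(i_l j_l).  The index map
   iota_n on R is the ordinary mixed-radix index of the rotated sequence
   (r_(n+1), ..., r_k, r_1, ..., r_n), which is exactly how the Kronecker
   product U^(r_(n+1)) (x) ... (x) U^(r_n) numbers its rows and columns, so its
   entry at (row of i, column of j) is prod_(l in R) u^(l)_(i_l j_l); likewise
   for C.  As R and C partition the modes, the row and column indices together
   determine a multi-index, and the (row of i, column of i) entry of the
   triple product collapses to b_i. *)

Definition radix (D j : seq nat) : nat :=
  \sum_(s < size D) nth 0 j s * \prod_(s.+1 <= t < size D) nth 0 D t.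

Lemma radix_nil j : radix [::] j = 0.
Proof. by rewrite /radix big_ord0. Qed.

Lemma radix_cons x D y j :
  radix (x :: D) (y :: j) = y * \prod_(z <- D) z + radix D j.
Proof.
rewrite /radix /= big_ord_recl /= big_add1 /= [\prod_(z <- D) z](big_nth 0).
congr (_ * _ + _); apply: eq_bigr => s _.
by rewrite /bump /= add1n big_add1.
Qed.

Lemma radix_cat D1 D2 j1 j2 : size j1 = size D1 ->
  radix (D1 ++ D2) (j1 ++ j2) = radix D1 j1 * \prod_(z <- D2) z + radix D2 j2.
Proof.
elim: D1 j1 => [|x D1 IH] [|y j1] //=; first by rewrite radix_nil.
by move=> [hj]; rewrite !radix_cons IH // big_cat /= mulnDl addnA mulnA.
Qed.

Lemma radix_take n D j : n <= size D ->
  radix (take n D) (take n j) =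
  \sum_(s < n) nth 0 j s * \prod_(s.+1 <= t < n) nth 0 D t.
Proof.
move=> hn; rewrite /radix size_take_min (minn_idPl hn).
apply: eq_bigr => s _; rewrite nth_take //; congr (_ * _).
by rewrite !big_nat; apply: eq_bigr => t /andP[_ ht]; rewrite nth_take.
Qed.

Lemma radix_drop n D j :
  radix (drop n D) (drop n j) =
  \sum_(n <= s < size D) nth 0 j s * \prod_(s.+1 <= t < size D) nth 0 D t.
Proof.
rewrite /radix size_drop -[in RHS](add0n n) big_addn big_mkord.
apply: eq_bigr => s _; rewrite nth_drop addnC; congr (_ * _).
by rewrite -addSn big_addn; apply: eq_bigr => t _; rewrite nth_drop addnC.
Qed.

Lemma iota_idx_rot n D j : n <= size D -> size j = size D ->
  iota_idx n D j = radix (rot n D) (rot n j).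
Proof.
move=> hn hj; rewrite /rot radix_cat ?size_drop ?hj // radix_take // radix_drop.
rewrite /iota_idx mulnC; congr (_ * _ + _).
by rewrite (big_nth 0) size_takel // big_mkord; apply: eq_bigr => s _; rewrite nth_take.
Qed.

Lemma perm_enum_ord N (s : seq 'I_N) :
  size s = N -> (forall l, l \in s) -> perm_eq s (enum 'I_N).
Proof.
move=> hs hl; apply: uniq_perm; last 2 first.
- exact: enum_uniq.
- by move=> l; rewrite mem_enum hl.
by apply: (leq_size_uniq (enum_uniq 'I_N)) => [l _|]; rewrite ?mem_enum ?size_enum_ord ?hs.
Qed.

Section MultiIndex.
Variables (N : nat) (D : 'I_N -> nat).

Lemma dprodE s : dprod D s = \prod_(l <- s) D l.
Proof. by elim: s => [|l s IH]; rewrite ?big_nil ?big_cons //= IH. Qed.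

(* Built from [mxtens_index], so that [mx_index s] numbers the rows and columns
   of [kron_seq U s]. *)
Fixpoint mx_index (s : seq 'I_N) (i : midx D) : 'I_(dprod D s) :=
  match s return 'I_(dprod D s) with
  | [::] => ord0
  | l :: s' => mxtens_index (i l, mx_index s' i)
  end.

Lemma val_mx_index s i : mx_index s i = radix (map D s) [seq val (i l) | l <- s] :> nat.
Proof.
elim: s => [|l s IH]; first by rewrite radix_nil.
by rewrite /= radix_cons big_map -dprodE IH.
Qed.

Lemma mx_index_eq s i i' : mx_index s i = mx_index s i' -> {in s, forall l, i l = i' l}.
Proof.
elim: s => [|l s IH] //= /(congr1 (@mxtens_unindex (D l) (dprod D s))).
rewrite !mxtens_indexK.
by case=> eq_l /IH eq_s l'; rewrite in_cons => /predU1P[->|/eq_s].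
Qed.

Lemma card_midx : #|{: midx D}| = \prod_(l < N) D l.
Proof.
rewrite card_dep_ffun foldr_map -big_enum /=.
by elim: (enum _) => [|l s IH]; rewrite ?big_nil ?big_cons //= card_ord IH.
Qed.

Section RowsAndColumns.
Variables r c : seq 'I_N.
Hypothesis rc_enum : perm_eq (r ++ c) (enum 'I_N).

Lemma mx_index_pair_inj : injective (fun i : midx D => (mx_index r i, mx_index c i)).
Proof.
move=> i i' [/mx_index_eq eq_r /mx_index_eq eq_c]; apply/ffunP => l.
have : l \in r ++ c by rewrite (perm_mem rc_enum) mem_enum.
by rewrite mem_cat => /orP[/eq_r|/eq_c].
Qed.

Lemma mx_index_pair_surj p q : exists i : midx D, mx_index r i = p /\ mx_index c i = q.
Proof.
have card_pairs : #|{: 'I_(dprod D r) * 'I_(dprod D c)}| <= #|{: midx D}|.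
  rewrite card_prod !card_ord card_midx !dprodE -big_cat (perm_big _ rc_enum) /=.
  by rewrite big_enum.
have [i [-> ->]] := codomP (inj_card_onto mx_index_pair_inj card_pairs (p, q)).
by exists i.
Qed.

End RowsAndColumns.
End MultiIndex.

Import GRing.Theory.
Local Open Scope ring_scope.

Lemma mxn_val m n (M : 'M[Cplx]_(m, n)) (a : 'I_m) (b : 'I_n) : mxn M a b = M a b.
Proof. by rewrite /mxn !valK. Qed.

Section ModeProducts.
Variables (N : nat) (d d' : 'I_N -> nat) (U : forall l : 'I_N, 'M[Cplx]_(d' l, d l)).

Definition partial_mode_product (A : tensor d) (s : seq 'I_N) : ntensor N :=
  fun i => \sum_(j : midx d | [forall l, (l \notin s) ==> ((j l : nat) == i l)])
             A j * \prod_(l <- s) mxn (U l) (i l) (j l).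

Lemma foldl_mode_product A s : uniq s ->
  foldl (fun X l => mode_product l X (U l)) (of_tensor A) s =1
  partial_mode_product A s.
Proof.
elim/last_ind: s => [_ i|s k IH].
  rewrite /partial_mode_product /of_tensor /=.
  by apply: eq_big => [j|j _]; [apply: eq_forallb | rewrite big_nil mulr1].
rewrite rcons_uniq => /andP[k_notin_s uniq_s] i.
rewrite foldl_rcons /mode_product.
under eq_bigr => t _ do rewrite IH // /partial_mode_product big_mkcond mulr_suml.
rewrite /partial_mode_product [RHS]big_mkcond exchange_big; apply: eq_bigr => j _.
rewrite [LHS](big_only1 (j k)) //; last first.
  move=> t t_ne_jk _; case: ifP => [/forallP/(_ k)|_]; last by rewrite mul0r.
  rewrite k_notin_s eqxx /= => /eqP/val_inj jk_eq_t.
  by rewrite jk_eq_t eqxx in t_ne_jk.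
have -> : [forall l, (l \notin s) ==> ((j l : nat) == if l == k then j k : nat else i l)]
    = [forall l, (l \notin rcons s k) ==> ((j l : nat) == i l)].
  apply: eq_forallb => l; rewrite mem_rcons in_cons negb_or.
  by case: (l =P k) => [->|_]; rewrite ?k_notin_s ?eqxx.
case: ifP => _; last by rewrite mul0r.
rewrite -cats1 big_cat big_seq1 -mulrA; congr (_ * (_ * _)).
apply: eq_big_seq => l l_in_s.
by case: (l =P k) => [l_eq_k|//]; rewrite -l_eq_k l_in_s in k_notin_s.
Qed.

Lemma full_mode_productE A i :
  full_mode_product A U i = \sum_(j : midx d) A j * \prod_l U l (i l) (j l).
Proof.
rewrite /full_mode_product /to_tensor foldl_mode_product ?enum_uniq //.
apply: eq_big => [j|j _]; first by apply/forallP => l; rewrite mem_enum.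
by rewrite big_enum; congr (_ * _); apply: eq_bigr => l _; rewrite mxn_val.
Qed.

Lemma kron_seq_mx_index s (i : midx d') (j : midx d) :
  kron_seq U s (mx_index s i) (mx_index s j) = \prod_(l <- s) U l (i l) (j l).
Proof.
elim: s => [|l s IH]; first by rewrite big_nil mxE.
by rewrite big_cons /= (tensmxE (U l) (kron_seq U s)) IH.
Qed.

End ModeProducts.

Section Unfolding.
Variables (N : nat) (D : 'I_N -> nat) (X : tensor D) (R C : seq 'I_N) (n m : nat).
Hypotheses (n_le : (n <= size R)%N) (m_le : (m <= size C)%N).

Lemma unfoldE p q :
  unfold X R n C m p q =
  \sum_(i | (mx_index (rot n R) i == p) && (mx_index (rot m C) i == q)) X i.
Proof.
rewrite mxE; apply: eq_bigl => i.
by rewrite !iota_idx_rot ?size_map // -!map_rot -!val_mx_index.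
Qed.

Lemma mulmx_unfold P Q (K : 'M[Cplx]_(P, dprod D (rot n R)))
    (L : 'M[Cplx]_(Q, dprod D (rot m C))) p q :
  (K *m unfold X R n C m *m L^T) p q =
  \sum_i K p (mx_index (rot n R) i) * X i * L q (mx_index (rot m C) i).
Proof.
rewrite mxE [RHS](partition_big (mx_index (rot m C)) xpredT) //.
apply: eq_bigr => b _; rewrite mxE mulr_suml.
rewrite [RHS](partition_big (mx_index (rot n R)) xpredT) //; apply: eq_bigr => a _.
rewrite unfoldE [L^T _ _]mxE mulr_sumr mulr_suml.
by apply: eq_big => [i|i /andP[/eqP <- /eqP <-]]; first by rewrite andbC.
Qed.

Lemma unfold_mx_index (i : midx D) :
  perm_eq (rot n R ++ rot m C) (enum 'I_N) ->
  unfold X R n C m (mx_index (rot n R) i) (mx_index (rot m C) i) = X i.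
Proof.
move=> RC_enum; rewrite unfoldE (big_pred1 i) // => i' /=.
apply/andP/eqP => [[/eqP eq_R /eqP eq_C]|->]; last by rewrite !eqxx.
by apply: (mx_index_pair_inj RC_enum); rewrite /= eq_R eq_C.
Qed.

End Unfolding.

Theorem theorem3 (N : nat) (hN : (2 <= N)%N) (d d' : 'I_N -> nat)
    (A : tensor d) (U : forall l : 'I_N, 'M[Cplx]_(d' l, d l))
    (k n m : nat) (R C : seq 'I_N) :
  (1 <= k <= N - 1)%N -> (1 <= n <= k)%N -> (1 <= m <= N - k)%N ->
  size R = k -> size C = (N - k)%N -> uniq R -> uniq C ->
  (forall l : 'I_N, (l \in R) || (l \in C)) ->
  unfold (full_mode_product A U) R n C m
  = kron_seq U (rot n R) *m unfold A R n C m *m (kron_seq U (rot m C))^T.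
Proof.
move=> /andP[_ k_le] /andP[_ n_le] /andP[_ m_le] size_R size_C _ _ RC_cover.
have n_le_R : (n <= size R)%N by rewrite size_R.
have m_le_C : (m <= size C)%N by rewrite size_C.
have RC_enum : perm_eq (rot n R ++ rot m C) (enum 'I_N).
  apply: perm_enum_ord => [|l]; last by rewrite mem_cat !mem_rot RC_cover.
  by rewrite size_cat !size_rot size_R size_C subnKC // (leq_trans k_le) ?leq_subr.
apply/matrixP => p q; have [i [<- <-]] := mx_index_pair_surj RC_enum p q.
rewrite unfold_mx_index // full_mode_productE mulmx_unfold //.
apply: eq_bigr => j _.
by rewrite !kron_seq_mx_index mulrAC [RHS]mulrC -big_cat (perm_big _ RC_enum) big_enum.
Qed.
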